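(* Consider a finite discounted MDP as described in the context, with discount factor $\alpha\in(0,1)$, terminal reward vector $v^0\in\mathbb{R}^m$, and accuracy $\epsilon>0$. Let $v^1(x):=\max_{a\in A(x)}r(x,a)$ for $x\in\mathbb{X}$, assume the coefficient $\gamma$ of the MDP satisfies $\gamma\in(0,1]$, and assume $sp(v^1)+sp(v^0)>0$. Then the value iteration algorithm (described in the context) finds a deterministic $\epsilon$-optimal policy after a finite number of iterations bounded above by $$F(\alpha):=\max\left\{\left\lceil\frac{\log\frac{(1-\alpha)\epsilon\gamma}{sp(v^1)+(1+\alpha)sp(v^0)}}{\log(\alpha\gamma)}\right\rceil,1\right\}.$$ Furthermore, for any fixed $\epsilon>0$, any fixed $\gamma\in(0,1]$ and any fixed $v^0,v^1\in\mathbb{R}^m$ with $sp(v^1)+sp(v^0)>0$, the function $F$ defined by this formula on $\alpha\in(0,1)$ satisfies: (a) $\lim_{\alpha\downarrow0}F(\alpha)=1$ and $\lim_{\alpha\uparrow1}F(\alpha)=+\infty$; (b) $F(\alpha)$ is non-decreasing in $\alpha$.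
   Context: A finite MDP has state space $\mathbb{X}=\{1,\dots,m\}$, nonempty finite action sets $A(x)$ for $x\in\mathbb{X}$, with $k=\sum_{x}|A(x)|$; one-step rewards $r(x,a)\in\mathbb{R}$ and transition probabilities $p(y|x,a)$ with $\sum_y p(y|x,a)=1$; and a terminal reward vector $v^0\in\mathbb{R}^m$. For a policy $\pi$ (possibly randomized and history-dependent) and initial state $x$, $v^\pi_\alpha(x)=\mathbb{E}^\pi_x\sum_{t=0}^\infty \alpha^t r(x_t,a_t)$ and $v_\alpha(x)=\sup_\pi v^\pi_\alpha(x)$. A policy $\pi$ is $\epsilon$-optimal if $v^\pi_\alpha(x)\ge v_\alpha(x)-\epsilon$ for all $x$. A deterministic policy is a map $\phi$ with $\phi(x)\in A(x)$. For $v\in\mathbb{R}^m$, $T^a_\alpha v(x)=r(x,a)+\alpha\sum_{y}p(y|x,a)v(y)$, $T^\phi_\alpha v(x)=T^{\phi(x)}_\alpha v(x)$, $T_\alpha v(x)=\max_{a\in A(x)}T^a_\alpha v(x)$. The span seminorm is $sp(u)=\max_x u(x)-\min_x u(x)$. The coefficient $\gamma$ of the MDP is $\gamma:=\max_{x,y\in\mathbb{X},\,a\in A(x),\,b\in A(y)}\big[1-\sum_{z}\min\{p(z|x,a),p(z|y,b)\}\big]$. Value iteration algorithm (given $\alpha\in(0,1)$, $\epsilon>0$): (1) set $u:=v^0$ and a number $\Delta>\frac{1-\alpha}{\alpha}\epsilon$; (2) while $\Delta>\frac{1-\alpha}{\alpha}\epsilon$: compute $v:=T_\alpha u$, set $\Delta:=sp(u-v)$,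 $u^*:=u$, $u:=v$ (each pass is one iteration); (3) output a deterministic policy $\phi$ with $v=T^\phi_\alpha u^*$. *)

From HB Require Import structures.
From mathcomp Require Import all_boot all_order all_algebra.
From mathcomp Require Import all_classical all_reals all_analysis.
Set Implicit Arguments. Unset Strict Implicit. Unset Printing Implicit Defensive.
Import Order.TTheory GRing.Theory Num.Theory.
Import numFieldNormedType.Exports.
Local Open Scope classical_set_scope.
Local Open Scope ring_scope.

Section MDP.
Variable R : realType.
Variable m : nat.
Local Notation X := ('I_m.+1).
Variable Act : finType.
Variable A : X -> {set Act}.
Variable r : X -> Act -> R.
Variable p : X -> Act -> X -> R.   (* p x a y = p(y|x,a)            *)

Definition maxA (x : X) (f : Act -> R) : R :=
  match [pick a in A x] with
  | Some a0 => \big[Num.max/f a0]_(a in A x) f a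
  | None => 0
  end.

Definition vmax (u : X -> R) : R := \big[Num.max/u ord0]_(x : X) u x.
Definition vmin (u : X -> R) : R := \big[Num.min/u ord0]_(x : X) u x.
Definition sp (u : X -> R) : R := vmax u - vmin u.

Definition Ta (alpha : R) (a : Act) (v : X -> R) (x : X) : R :=
  r x a + alpha * \sum_(y : X) p x a y * v y.
Definition Tphi (alpha : R) (phi : X -> Act) (v : X -> R) (x : X) : R :=
  Ta alpha (phi x) v x.
Definition T (alpha : R) (v : X -> R) (x : X) : R :=
  maxA x (fun a => Ta alpha a v x).

Definition v1 (x : X) : R := maxA x (r x).

Definition gamma : R :=
  \big[Num.max/0]_(x : X) \big[Num.max/0]_(y : X)
   \big[Num.max/0]_(a in A x) \big[Num.max/0]_(b in A y)
     (1 - \sum_(z : X) Num.min (p x a z) (p y b z)).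

(* randomized history-dependent policies: pi h x a is the probability
   of choosing a in current state x after history h (past state-action pairs) *)
Definition policy := seq (X * Act) -> X -> Act -> R.

Definition is_policy (pi : policy) : Prop :=
  forall h x, (forall a, 0 <= pi h x a) /\ (forall a, a \notin A x -> pi h x a = 0)
              /\ \sum_(a in A x) pi h x a = 1.

(* expected discounted reward of the first N steps, starting after history h
   in state x (the expectation of sum_{t<N} alpha^t r(x_t,a_t)) *)
Fixpoint vN (alpha : R) (pi : policy) (N : nat) (h : seq (X * Act)) (x : X) : R :=
  match N with
  | 0 => 0
  | N'.+1 => \sum_(a : Act) pi h x a *
              (r x a + alpha * \sum_(y : X) p x a y * vN alpha pi N' (rcons h (x, a)) y)
  end.

Definition vpi (alpha : R) (pi : policy) (x : X) : R :=
  limn (fun N => vN alpha pi N [::] x).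

Definition vopt (alpha : R) (x : X) : R :=
  sup [set vpi alpha pi x | pi in is_policy].

Definition eps_optimal (alpha eps : R) (pi : policy) : Prop :=
  forall x, vopt alpha x - eps <= vpi alpha pi x.

Definition det_policy (phi : X -> Act) : policy :=
  fun _ x a => if a == phi x then 1 else 0.

Definition VI (alpha : R) (v0 : X -> R) (n : nat) : X -> R := iter n (T alpha) v0.

End MDP.

Definition Fbound (R : realType) (m : nat) (eps gam : R) (v1 v0 : 'I_m.+1 -> R) (alpha : R) : R :=
  Num.max
    ((Num.ceil (ln ((1 - alpha) * eps * gam / (sp v1 + (1 + alpha) * sp v0))
                / ln (alpha * gam)))%:~R)
    1.

(* Value iteration stops after at most F(alpha) steps because the Bellman
   operator [T alpha] contracts the span seminorm with modulus [alpha * gamma]: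
   two transition laws agree on a mass [\sum_z min (p(z|x,a)) (p(z|y,b))], so
   only the remaining mass, at most [gamma], sees a difference of value vectors.
   Hence [sp (u_(n-1) - u_n) <= (alpha gamma)^(n-1) sp (v^0 - T v^0)], and
   [sp (v^0 - T v^0) <= sp v^1 + (1 + alpha) sp v^0]; taking logarithms, the
   stopping threshold [(1 - alpha) eps / alpha] is reached once [n >= F(alpha)].
   When the span of [u - T u] is that small, the greedy policy [phi] for [u]
   is eps-optimal: [T u] is almost a fixed point of both [T] and [T^phi], and
   comparing the finite-horizon values with [T u] bounds [v_alpha] from above
   and [v^phi_alpha] from below by [T u] plus the geometric sums of the defects. *)

From Pilot Require Import Defs.
From HB Require Import structures.
From mathcomp Require Import all_boot all_order all_algebra.
From mathcomp Require Import all_classical all_reals all_analysis.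
From mathcomp Require Import ring lra.
Set Implicit Arguments. Unset Strict Implicit. Unset Printing Implicit Defensive.
Import Order.TTheory GRing.Theory Num.Theory.
Import numFieldNormedType.Exports.
Local Open Scope classical_set_scope.
Local Open Scope ring_scope.

Section Averages.
Variables (R : realDomainType) (I : finType).

Definition is_distr (P : I -> R) : Prop := (forall i, 0 <= P i) /\ \sum_i P i = 1.

Variable P : I -> R.
Hypothesis P_distr : is_distr P.

Lemma ler_avg (f g : I -> R) :
  (forall i, f i <= g i) -> \sum_i P i * f i <= \sum_i P i * g i.
Proof.
by have [P_ge0 _] := P_distr; move=> fg; apply: ler_sum => i _; rewrite ler_wpM2l.
Qed.

Lemma avg_le (g : I -> R) c : (forall i, P i != 0 -> g i <= c) -> \sum_i P i * g i <= c.
Proof.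
have [P_ge0 P_sum1] := P_distr; move=> g_le.
rewrite -[c]mul1r -P_sum1 mulr_suml; apply: ler_sum => i _.
have [->|/g_le gi_le] := eqVneq (P i) 0; first by rewrite !mul0r.
by rewrite ler_wpM2l.
Qed.

Lemma avg_ge (g : I -> R) c : (forall i, P i != 0 -> c <= g i) -> c <= \sum_i P i * g i.
Proof.
move=> g_ge; rewrite -lerN2 -sumrN.
under eq_bigr do rewrite -mulrN.
by apply: avg_le => i /g_ge; rewrite lerN2.
Qed.

Lemma norm_avg_le (g : I -> R) c :
  (forall i, P i != 0 -> `|g i| <= c) -> `|\sum_i P i * g i| <= c.
Proof.
move=> g_le; rewrite ler_norml avg_le ?avg_ge // => i /g_le.
  by rewrite ler_norml => /andP[].
by rewrite ler_norml => /andP[].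
Qed.

Lemma avgDr (g : I -> R) c : \sum_i P i * (g i + c) = \sum_i P i * g i + c.
Proof.
have [_ P_sum1] := P_distr.
rewrite -[c in RHS]mul1r -P_sum1 mulr_suml -big_split.
by apply: eq_bigr => i _; rewrite mulrDr.
Qed.

End Averages.

Section Span.
Variables (R : realType) (m : nat).
Local Notation X := 'I_m.+1.
Implicit Types (u d : X -> R) (P Q : X -> R).

Lemma le_vmax u x : u x <= vmax u.
Proof. exact: le_bigmax. Qed.

Lemma vmin_le u x : vmin u <= u x.
Proof. exact: bigmin_le. Qed.

Lemma vmax_le u c : (forall x, u x <= c) -> vmax u <= c.
Proof. by move=> u_le; apply: bigmax_le. Qed.

Lemma le_vmin u c : (forall x, c <= u x) -> c <= vmin u.
Proof. by move=> u_ge; apply: le_bigmin. Qed.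

Lemma subr_le_sp u x y : u x - u y <= sp u.
Proof. by rewrite lerB ?le_vmax ?vmin_le. Qed.

Lemma sp_ge0 u : 0 <= sp u.
Proof. by rewrite -(subrr (u ord0)) subr_le_sp. Qed.

Lemma sp_le u c : (forall x y, u x - u y <= c) -> sp u <= c.
Proof.
move=> u_le; rewrite /sp lerBlDr; apply: vmax_le => x; rewrite -lerBlDl.
by apply: le_vmin => y; rewrite lerBlDl -lerBlDr.
Qed.

Lemma avg_le_vmax P u : is_distr P -> \sum_x P x * u x <= vmax u.
Proof. by move=> P_distr; apply: avg_le => // x _; apply: le_vmax. Qed.

Lemma vmin_le_avg P u : is_distr P -> vmin u <= \sum_x P x * u x.
Proof. by move=> P_distr; apply: avg_ge => // x _; apply: vmin_le. Qed.

Lemma avgB_le_sp P Q d : is_distr P -> is_distr Q ->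
  \sum_z P z * d z - \sum_z Q z * d z <= (1 - \sum_z Num.min (P z) (Q z)) * sp d.
Proof.
move=> [P_ge0 P_sum1] [Q_ge0 Q_sum1].
pose mn z := Num.min (P z) (Q z).
have split_avg S : \sum_z S z * d z = \sum_z (S z - mn z) * d z + \sum_z mn z * d z.
  by rewrite -big_split; apply: eq_bigr => z _ /=; rewrite mulrBl subrK.
have P_rest : \sum_z (P z - mn z) * d z <= (1 - \sum_z mn z) * vmax d.
  rewrite -P_sum1 -sumrB mulr_suml; apply: ler_sum => z _.
  by rewrite ler_wpM2l ?le_vmax // subr_ge0 ge_min lexx.
have Q_rest : (1 - \sum_z mn z) * vmin d <= \sum_z (Q z - mn z) * d z.
  rewrite -Q_sum1 -sumrB mulr_suml; apply: ler_sum => z _.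
  by rewrite ler_wpM2l ?vmin_le // subr_ge0 ge_min lexx orbT.
rewrite (split_avg P) (split_avg Q) /sp mulrBr; lra.
Qed.

End Span.

Section GeometricSequences.
Variables (R : realType) (alpha : R).
Hypothesis alpha_ge0 : 0 <= alpha.
Hypothesis alpha_lt1 : alpha < 1.

Let alpha_norm_lt1 : `|alpha| < 1. Proof. by rewrite ger0_norm. Qed.

Lemma cvg_addr_geometric (c C : R) : (fun N => c + C * alpha ^+ N) @ \oo --> c.
Proof.
rewrite -[X in _ --> X]addr0; apply: cvgD; first exact: cvg_cst.
exact: cvg_geometric.
Qed.

Lemma limn_le_geometric (u : R ^nat) c C :
  cvgn u -> (forall N, u N <= c + C * alpha ^+ N) -> limn u <= c.
Proof.
move=> u_cvg u_le; have tail_cvg := @cvg_addr_geometric c C.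
rewrite -(cvg_lim _ tail_cvg) //; apply: ler_lim => //; first exact: cvgP tail_cvg.
exact: nearW.
Qed.

Lemma limn_ge_geometric (u : R ^nat) c C :
  cvgn u -> (forall N, c + C * alpha ^+ N <= u N) -> c <= limn u.
Proof.
move=> u_cvg u_ge; have tail_cvg := @cvg_addr_geometric c C.
rewrite -(cvg_lim _ tail_cvg) //; apply: ler_lim => //; first exact: cvgP tail_cvg.
exact: nearW.
Qed.

(* [u N - K alpha^N] increases and [u N + K alpha^N] decreases: they are adjacent. *)
Lemma is_cvgn_geometric_increments (u : R ^nat) M :
  (forall k, `|u k.+1 - u k| <= M * alpha ^+ k) -> cvgn u.
Proof.
move=> u_incr; pose K := M / (1 - alpha).
have K_step k : K * alpha ^+ k - K * alpha ^+ k.+1 = M * alpha ^+ k.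
  by rewrite /K exprS; field; rewrite subr_eq0 gt_eqF.
pose lo N := u N - K * alpha ^+ N; pose hi N := u N + K * alpha ^+ N.
have lo_incr : nondecreasing_seq lo.
  apply/nondecreasing_seqP => k; have := u_incr k; rewrite ler_norml /lo.
  have := K_step k; lra.
have hi_decr : nonincreasing_seq hi.
  apply/nonincreasing_seqP => k; have := u_incr k; rewrite ler_norml /hi.
  have := K_step k; lra.
have hi_lo : hi - lo @ \oo --> 0.
  have -> : hi - lo = geometric (2 * K) alpha.
    by apply: funext => N; rewrite !fctE /hi /lo /=; ring.
  exact: cvg_geometric.
have [_ lo_cvg _] := adjacent_seq lo_incr hi_decr hi_lo.
have -> : u = lo + geometric K alpha by apply: funext => N; rewrite /lo /= subrK.
by apply: is_cvgD => //; apply: cvgP (cvg_geometric _ _).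
Qed.

End GeometricSequences.

Section MDP.
Variables (R : realType) (m : nat) (Act : finType).
Local Notation X := 'I_m.+1.
Variables (A : X -> {set Act}) (r : X -> Act -> R) (p : X -> Act -> X -> R).
Hypothesis A_neq0 : forall x, exists a, a \in A x.
Hypothesis p_distr : forall x a, a \in A x -> is_distr (p x a).

Implicit Types (alpha : R) (u v : X -> R).

Local Notation maxA := (Defs.maxA A).
Local Notation Ta := (Ta r p).
Local Notation Tphi := (Tphi r p).
Local Notation T := (T A r p).
Local Notation VI := (VI A r p).
Local Notation gamma := (gamma A p).
Local Notation v1 := (v1 A r).

Lemma le_maxA x (f : Act -> R) a : a \in A x -> f a <= maxA x f.
Proof.
rewrite /maxA; case: pickP => [a0 _|A0] Aa; last by rewrite A0 in Aa.
exact: le_bigmax_cond.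
Qed.

Lemma maxA_le x (f : Act -> R) c : (forall a, a \in A x -> f a <= c) -> maxA x f <= c.
Proof.
move=> f_le; rewrite /maxA; case: pickP => [a0 Aa0|A0]; last first.
  by have [a] := A_neq0 x; rewrite A0.
by apply: bigmax_le => //; apply: f_le.
Qed.

Lemma maxA_attained x (f : Act -> R) : exists2 a, a \in A x & maxA x f = f a.
Proof.
rewrite /maxA; case: pickP => [a0 Aa0|A0]; last by have [a] := A_neq0 x; rewrite A0.
elim/big_ind: _ => [|_ _ [a1 Aa1 ->] [a2 Aa2 ->]|a Aa]; [by exists a0| |by exists a].
by rewrite /Num.max; case: ifP => _; [exists a2 | exists a1].
Qed.

Lemma le_T alpha u x a : a \in A x -> Ta alpha a u x <= T alpha u x.
Proof. exact: le_maxA. Qed.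

Lemma T_attained alpha u x : exists2 a, a \in A x & T alpha u x = Ta alpha a u x.
Proof. exact: maxA_attained. Qed.

Lemma le_gamma x y a b : a \in A x -> b \in A y ->
  1 - \sum_z Num.min (p x a z) (p y b z) <= gamma.
Proof.
move=> Aa Ab; apply: (bigmax_sup x) => //; apply: (bigmax_sup y) => //.
by apply: (bigmax_sup a) => //; apply: (bigmax_sup b).
Qed.

Lemma gamma_ge0 : 0 <= gamma.
Proof.
have [a Aa] := A_neq0 ord0; apply: le_trans (le_gamma Aa Aa).
have [_ <-] := p_distr Aa; rewrite subr_ge0; apply: ler_sum => z _.
by rewrite ge_min lexx.
Qed.

Lemma TaB alpha a u v x :
  Ta alpha a v x - Ta alpha a u x = alpha * \sum_y p x a y * (v y - u y).
Proof.
rewrite /Ta; under [X in _ = _ * X]eq_bigr do rewrite mulrBr.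
rewrite sumrB; ring.
Qed.

Lemma sp_T_contract alpha u v : 0 <= alpha ->
  sp (T alpha u \- T alpha v) <= alpha * gamma * sp (u \- v).
Proof.
move=> alpha_ge0; apply: sp_le => x y /=.
have [a Aa ->] := T_attained alpha u x; have [b Ab ->] := T_attained alpha v y.
have Tv_x := le_T alpha v Aa; have Tu_y := le_T alpha u Ab.
apply: le_trans (_ : (Ta alpha a u x - Ta alpha a v x) -
                     (Ta alpha b u y - Ta alpha b v y) <= _); first lra.
rewrite !TaB -mulrBr -mulrA ler_wpM2l //.
apply: le_trans (avgB_le_sp _ (p_distr Aa) (p_distr Ab)) _.
by rewrite ler_wpM2r ?sp_ge0 ?le_gamma.
Qed.

Lemma sp_VI_step_le alpha v0 n : 0 <= alpha ->
  sp (VI alpha v0 n \- VI alpha v0 n.+1) <= (alpha * gamma) ^+ n * sp (v0 \- T alpha v0).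
Proof.
move=> alpha_ge0; elim: n => [|n IHn]; first by rewrite expr0 mul1r.
apply: le_trans (sp_T_contract _ _ alpha_ge0) _.
by rewrite exprS -(mulrA (alpha * gamma)) ler_wpM2l // mulr_ge0 // gamma_ge0.
Qed.

Lemma sp_T_step_le alpha v0 : 0 <= alpha ->
  sp (v0 \- T alpha v0) <= sp v1 + (1 + alpha) * sp v0.
Proof.
move=> alpha_ge0; apply: sp_le => x y /=.
have Ty_le : T alpha v0 y <= v1 y + alpha * vmax v0.
  apply: maxA_le => a Aa; rewrite /Ta lerD ?le_maxA //.
  by rewrite ler_wpM2l //; apply/avg_le_vmax/p_distr.
have Tx_ge : v1 x + alpha * vmin v0 <= T alpha v0 x.
  have [a Aa ->] : exists2 a, a \in A x & v1 x = r x a := maxA_attained x (r x).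
  apply: le_trans (le_T alpha v0 Aa).
  by rewrite /Ta lerD2l ler_wpM2l //; apply/vmin_le_avg/p_distr.
have := subr_le_sp v0 x y; have := subr_le_sp v1 y x.
have : alpha * vmax v0 - alpha * vmin v0 = alpha * sp v0 by rewrite /sp mulrBr.
lra.
Qed.

Local Notation vN := (vN r p).
Local Notation vpi := (vpi r p).
Local Notation vopt := (vopt A r p).
Local Notation det := (det_policy R).

Lemma policy_distr (pi : policy R m Act) h x : is_policy A pi -> is_distr (pi h x).
Proof.
move=> /(_ h x) [pi_ge0 [pi_out pi_sum1]]; split=> //.
by rewrite (bigID (mem (A x))) /= pi_sum1 big1 ?addr0 // => a /pi_out.
Qed.

Lemma policy_support (pi : policy R m Act) h x a :
  is_policy A pi -> pi h x a != 0 -> a \in A x.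
Proof.
by move=> /(_ h x) [_ [pi_out _]]; apply: contraTT => /pi_out ->; rewrite eqxx.
Qed.

Lemma det_policy_neq0 (phi : X -> Act) h x a : det phi h x a != 0 -> a = phi x.
Proof. by rewrite /det_policy; case: (a =P phi x) => // _; rewrite eqxx. Qed.

Lemma is_policy_det (phi : X -> Act) : (forall x, phi x \in A x) -> is_policy A (det phi).
Proof.
move=> phiA h x; rewrite /det_policy; split; first by move=> a; case: eqP.
split; first by move=> a; case: eqP => // ->; rewrite phiA.
by rewrite (bigD1 (phi x)) //= eqxx big1 ?addr0 // => a /andP[_ /negbTE ->].
Qed.

Section Evaluation.
Variable alpha : R.
Hypotheses (alpha_ge0 : 0 <= alpha) (alpha_lt1 : alpha < 1).
Variable pi : policy R m Act.
Hypothesis pi_policy : is_policy A pi.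

Lemma vN_succ_dist M : (forall x a, `|r x a| <= M) ->
  forall k h x, `|vN alpha pi k.+1 h x - vN alpha pi k h x| <= M * alpha ^+ k.
Proof.
move=> r_le; elim=> [|k IHk] h x.
  rewrite subr0 expr0 mulr1 /=; apply: norm_avg_le; first exact: policy_distr.
  by move=> a _; rewrite big1 ?mulr0 ?addr0 // => y _; rewrite mulr0.
rewrite [vN _ _ k.+2 _ _]/= [vN _ _ k.+1 _ _]/= -sumrB.
under eq_bigr do rewrite -mulrBr opprD addrACA subrr add0r -mulrBr -sumrB.
apply: norm_avg_le; first exact: policy_distr.
move=> a /(policy_support pi_policy) Aa; under eq_bigr do rewrite -mulrBr.
rewrite normrM ger0_norm // exprS mulrCA ler_wpM2l //.
by apply: norm_avg_le => [|y _]; [exact: p_distr | exact: IHk].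
Qed.

Lemma vN_cvg h x : cvgn (fun N => vN alpha pi N h x).
Proof.
have r_le y a : `|r y a| <= \sum_z \sum_b `|r z b|.
  rewrite (bigD1 y) //= (bigD1 a) //= -addrA lerDl.
  by rewrite addr_ge0 ?sumr_ge0 // => z _; rewrite sumr_ge0.
exact: is_cvgn_geometric_increments alpha_ge0 alpha_lt1 _ _
                                   (fun k => vN_succ_dist r_le k h x).
Qed.

Local Notation K c := (c / (1 - alpha)).

Let K_fix c : c + alpha * K c = K c.
Proof. by field; rewrite subr_eq0 gt_eqF. Qed.

(* [K c] is the fixed point of [c + alpha * _], so the bound propagates along
   the horizon; the geometric term absorbs the initial value [vN 0 = 0]. *)
Lemma vN_le w c : (forall h x a, pi h x a != 0 -> Ta alpha a w x <= w x + c) ->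
  forall N h x, vN alpha pi N h x <= w x + K c + vmax (fun y => - w y - K c) * alpha ^+ N.
Proof.
move=> Ta_le; set C := vmax _; elim=> [|N IHN] h x /=.
  by have := le_vmax (fun y => - w y - K c) x; rewrite -/C expr0 mulr1 /=; lra.
apply: avg_le => [|a pi_a]; first exact: policy_distr.
have Aa := policy_support pi_policy pi_a; have := Ta_le h x a pi_a.
have : \sum_y p x a y * vN alpha pi N (rcons h (x, a)) y <=
       \sum_y p x a y * w y + (K c + C * alpha ^+ N).
  rewrite -(avgDr (p_distr Aa)); apply: (ler_avg (p_distr Aa)) => y.
  by rewrite addrA IHN.
move/(ler_wpM2l alpha_ge0); rewrite /Ta exprS mulrCA.
by have := K_fix c; lra.
Qed.

Lemma vN_ge w c : (forall h x a, pi h x a != 0 -> w x + c <= Ta alpha a w x) ->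
  forall N h x, w x + K c + vmin (fun y => - w y - K c) * alpha ^+ N <= vN alpha pi N h x.
Proof.
move=> Ta_ge; set C := vmin _; elim=> [|N IHN] h x /=.
  by have := vmin_le (fun y => - w y - K c) x; rewrite -/C expr0 mulr1 /=; lra.
apply: avg_ge => [|a pi_a]; first exact: policy_distr.
have Aa := policy_support pi_policy pi_a; have := Ta_ge h x a pi_a.
have : \sum_y p x a y * w y + (K c + C * alpha ^+ N) <=
       \sum_y p x a y * vN alpha pi N (rcons h (x, a)) y.
  rewrite -(avgDr (p_distr Aa)); apply: (ler_avg (p_distr Aa)) => y.
  by rewrite addrA IHN.
move/(ler_wpM2l alpha_ge0); rewrite /Ta exprS mulrCA.
by have := K_fix c; lra.
Qed.

Lemma vpi_le w c : (forall h x a, pi h x a != 0 -> Ta alpha a w x <= w x + c) ->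
  forall x, vpi alpha pi x <= w x + K c.
Proof.
move=> Ta_le x.
by have := limn_le_geometric alpha_ge0 alpha_lt1 (@vN_cvg [::] x)
                             (fun N => vN_le Ta_le N [::] x).
Qed.

Lemma vpi_ge w c : (forall h x a, pi h x a != 0 -> w x + c <= Ta alpha a w x) ->
  forall x, w x + K c <= vpi alpha pi x.
Proof.
move=> Ta_ge x.
by have := limn_ge_geometric alpha_ge0 alpha_lt1 (@vN_cvg [::] x)
                             (fun N => vN_ge Ta_ge N [::] x).
Qed.

End Evaluation.

Lemma vopt_le alpha w c : 0 <= alpha -> alpha < 1 ->
  (forall x a, a \in A x -> Ta alpha a w x <= w x + c) ->
  forall x, vopt alpha x <= w x + c / (1 - alpha).
Proof.
move=> alpha_ge0 alpha_lt1 Ta_le x; apply: ge_sup.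
  pose phi y := xchoose (A_neq0 y).
  exists (vpi alpha (det phi) x), (det phi) => //.
  by apply: is_policy_det => y; apply: xchooseP.
move=> _ [pi pi_policy <-]; apply: vpi_le => // h y a /(policy_support pi_policy).
exact: Ta_le.
Qed.

Section Greedy.
Variables (alpha : R) (u : X -> R).
Hypothesis alpha_ge0 : 0 <= alpha.
Local Notation e := (u \- T alpha u).

Lemma Ta_T_le x a : a \in A x ->
  Ta alpha a (T alpha u) x <= T alpha u x - alpha * vmin e.
Proof.
move=> Aa; have : \sum_y p x a y * (T alpha u y - u y) <= - vmin e.
  by apply: (avg_le (p_distr Aa)) => y _; rewrite lerNr opprB (vmin_le e).
move/(ler_wpM2l alpha_ge0); rewrite mulrN -TaB.
by have := le_T alpha u Aa; lra.
Qed.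

Lemma greedy_Ta_T_ge (phi : X -> Act) x :
  phi x \in A x -> Tphi alpha phi u = T alpha u ->
  T alpha u x - alpha * vmax e <= Ta alpha (phi x) (T alpha u) x.
Proof.
move=> Aphi /(congr1 (fun v => v x)) phi_greedy.
have : - vmax e <= \sum_y p x (phi x) y * (T alpha u y - u y).
  by apply: (avg_ge (p_distr Aphi)) => y _; rewrite lerNl opprB (le_vmax e).
move/(ler_wpM2l alpha_ge0); rewrite mulrN -TaB.
by move: phi_greedy; rewrite /Defs.Tphi => ->; lra.
Qed.

End Greedy.

Lemma greedy_eps_optimal alpha eps (phi : X -> Act) u : 0 < alpha -> alpha < 1 ->
  (forall x, phi x \in A x) -> Tphi alpha phi u = T alpha u ->
  sp (u \- T alpha u) <= (1 - alpha) / alpha * eps ->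
  eps_optimal A r p alpha eps (det phi).
Proof.
move=> alpha_gt0 alpha_lt1 phiA phi_greedy sp_le_eps x.
have alpha_ge0 := ltW alpha_gt0; set e := u \- T alpha u.
have vopt_le_x := vopt_le alpha_ge0 alpha_lt1 (Ta_T_le u alpha_ge0) x.
have vpi_ge_x : T alpha u x - alpha * vmax e / (1 - alpha) <= vpi alpha (det phi) x.
  rewrite -mulNr; apply: (vpi_ge alpha_ge0 alpha_lt1 (is_policy_det phiA) (w := T alpha u)).
  by move=> h y a /det_policy_neq0 ->; apply: greedy_Ta_T_ge.
have : alpha * sp e / (1 - alpha) <= eps.
  rewrite ler_pdivrMr ?subr_gt0 //; have := ler_wpM2l alpha_ge0 sp_le_eps.
  suff -> : alpha * ((1 - alpha) / alpha * eps) = eps * (1 - alpha) by [].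
  by field; rewrite gt_eqF.
have : alpha * vmax e / (1 - alpha) - alpha * vmin e / (1 - alpha) =
       alpha * sp e / (1 - alpha) by rewrite /sp -mulrBl -mulrBr.
move: vopt_le_x; rewrite mulNr; lra.
Qed.

End MDP.

Section FboundAnalysis.
Variables (R : realType) (m : nat) (eps gam : R) (v1 v0 : 'I_m.+1 -> R).
Hypotheses (eps_gt0 : 0 < eps) (gam_gt0 : 0 < gam) (gam_le1 : gam <= 1).
Hypothesis sp_gt0 : 0 < sp v1 + sp v0.
Implicit Types a b : R.

Local Notation D a := (sp v1 + (1 + a) * sp v0).
Local Notation ratio a := ((1 - a) * eps * gam / D a).
Local Notation q a := (ln (ratio a) / ln (a * gam)).
Local Notation F := (Fbound eps gam v1 v0).

Let eps_ge0 : 0 <= eps. Proof. exact: ltW. Qed.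
Let gam_ge0 : 0 <= gam. Proof. exact: ltW. Qed.
Let sp0_ge0 : 0 <= sp v0. Proof. exact: sp_ge0. Qed.

Lemma D_gt0 a : 0 <= a -> 0 < D a.
Proof.
move=> a_ge0; have := sp_gt0; have := mulr_ge0 a_ge0 sp0_ge0.
by rewrite mulrDl mul1r; lra.
Qed.

Lemma ratio_gt0 a : 0 <= a -> a < 1 -> 0 < ratio a.
Proof. by move=> a_ge0 a_lt1; rewrite divr_gt0 ?D_gt0 // !mulr_gt0 // subr_gt0. Qed.

Lemma ln_mul_gam_lt0 a : 0 < a -> a < 1 -> ln (a * gam) < 0.
Proof.
move=> a_gt0 a_lt1; rewrite ln_lt0 // mulr_gt0 //=.
by apply: le_lt_trans a_lt1; rewrite ler_piMr // ltW.
Qed.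

Lemma pow_le_of_q_le a n : 0 < a -> a < 1 -> q a <= n.+1%:R ->
  (a * gam) ^+ n * D a <= (1 - a) / a * eps.
Proof.
move=> a_gt0 a_lt1; rewrite ler_ndivrMr ?ln_mul_gam_lt0 // => q_le.
have agam_gt0 : 0 < a * gam by rewrite mulr_gt0.
have pow_le : (a * gam) ^+ n.+1 <= ratio a.
  by rewrite -ler_ln ?posrE ?ratio_gt0 ?exprn_gt0 ?(ltW a_gt0) // lnXn // -mulr_natr mulrC.
rewrite -(ler_pM2l agam_gt0) mulrA -exprS.
have -> : a * gam * ((1 - a) / a * eps) = (1 - a) * eps * gam by field; rewrite gt_eqF.
by rewrite -ler_pdivlMr ?D_gt0 ?(ltW a_gt0).
Qed.

Lemma q_le_Fbound a : q a <= F a.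
Proof. by rewrite /Fbound le_max ceil_ge. Qed.

Lemma Fbound_nat a : exists2 n : nat, (1 <= n)%N & n%:R = F a.
Proof.
rewrite /Fbound; have [k_ge1|k_lt1] := lerP 1 (Num.ceil (q a)).
  exists `|Num.ceil (q a)|%N; first by rewrite absz_gt0 gt_eqF // (lt_le_trans _ k_ge1).
  rewrite natr_absz ger0_norm ?(le_trans _ k_ge1) //.
  by apply/esym/max_idPl; rewrite -[1]/(1%:~R) ler_int.
by exists 1%N => //; apply/esym/max_idPr; rewrite -[1]/(1%:~R) ler_int ltW.
Qed.

Lemma Fbound_eq1 a : q a <= 1 -> F a = 1.
Proof.
by move=> q_le1; rewrite /Fbound; apply/max_idPr; rewrite -[1]/(1%:~R) ler_int ceil_le_int.
Qed.

Lemma ratio_le a b : 0 < a -> a <= b -> b < 1 -> ratio b <= ratio a.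
Proof.
move=> a_gt0 ab b_lt1; have b_gt0 := lt_le_trans a_gt0 ab.
apply: ler_pM.
- by rewrite !mulr_ge0 // subr_ge0 ltW.
- by rewrite invr_ge0 ltW // D_gt0 // ltW.
- by rewrite !ler_wpM2r // lerD2l lerN2.
- by rewrite lef_pV2 ?posrE ?D_gt0 ?(ltW a_gt0) ?(ltW b_gt0) // lerD2l ler_wpM2r // lerD2l.
Qed.

Lemma q_le a b : 0 < a -> a <= b -> b < 1 -> ratio a < 1 -> q a <= q b.
Proof.
move=> a_gt0 ab b_lt1 ratio_lt1; have b_gt0 := lt_le_trans a_gt0 ab.
have a_lt1 := le_lt_trans ab b_lt1.
have lnra_lt0 : ln (ratio a) < 0 by rewrite ln_lt0 // ratio_gt0 // ltW.
have lnr_le : ln (ratio b) <= ln (ratio a).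
  by rewrite ler_ln ?posrE ?ratio_gt0 ?(ltW a_gt0) ?(ltW b_gt0) //; apply: ratio_le.
have lnag_le : ln (a * gam) <= ln (b * gam).
  by rewrite ler_ln ?posrE ?mulr_gt0 // ler_wpM2r // ltW.
have := ln_mul_gam_lt0 a_gt0 a_lt1; have := ln_mul_gam_lt0 b_gt0 b_lt1.
move=> lnbg_lt0 lnag_lt0.
rewrite ler_ndivrMr // mulrAC ler_ndivrMr //; nra.
Qed.

Lemma Fbound_nondecreasing a b : 0 < a -> a <= b -> b < 1 -> F a <= F b.
Proof.
move=> a_gt0 ab b_lt1; have a_lt1 := le_lt_trans ab b_lt1.
have [ratio_ge1|ratio_lt1] := leP 1 (ratio a).
  rewrite Fbound_eq1 ?le_max ?lexx ?orbT //; apply: le_trans (ler01).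
  by rewrite mulr_ge0_le0 ?ln_ge0 // invr_le0 ltW // ln_mul_gam_lt0.
by rewrite /Fbound le_max2 // ler_int le_ceil // q_le.
Qed.

Lemma q_le1 a : 0 < a -> a < 1 -> a * (eps + sp v1 + 2 * sp v0) <= eps -> q a <= 1.
Proof.
move=> a_gt0 a_lt1 a_small; have agam_gt0 : 0 < a * gam by rewrite mulr_gt0.
rewrite ler_ndivrMr ?ln_mul_gam_lt0 // mul1r ler_ln ?posrE ?ratio_gt0 ?(ltW a_gt0) //.
rewrite ler_pdivlMr ?D_gt0 ?(ltW a_gt0) // mulrAC ler_wpM2r //.
have : a * a * sp v0 <= a * sp v0.
  by rewrite -mulrA ler_piMl ?mulr_ge0 ?(ltW a_gt0) ?(ltW a_lt1).
by move: a_small; lra.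
Qed.

Lemma Fbound_cvg0 : F a @[a --> (0:R)^'+] --> (1:R).
Proof.
have c_gt0 : 0 < eps + sp v1 + 2 * sp v0.
  by have := eps_gt0; have := sp_gt0; have := sp0_ge0; lra.
apply: cvg_near_cst; near=> a; apply: Fbound_eq1; apply: q_le1.
- by near: a; apply: nbhs_right_gt.
- by near: a; apply: nbhs_right_lt; apply: ltr01.
- rewrite -ler_pdivlMr //; near: a; apply: nbhs_right_le.
  by rewrite divr_gt0.
Unshelve. all: by end_near.
Qed.

Lemma ratio_le_linear a : 0 <= a -> a < 1 ->
  ratio a <= (1 - a) * (eps * gam / (sp v1 + sp v0)).
Proof.
move=> a_ge0 a_lt1; rewrite !mulrA ler_wpM2l ?mulr_ge0 ?subr_ge0 ?(ltW a_lt1) //.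
by rewrite lef_pV2 ?posrE ?D_gt0 // lerD2l ler_peMl // lerDl.
Qed.

Lemma Fbound_cvg1 : F a @[a --> (1:R)^'-] --> +oo.
Proof.
apply/cvgryPger => M _; pose M' := Num.max M 0.
pose L := - ln (gam / 2); pose K := eps * gam / (sp v1 + sp v0).
have M'_ge0 : 0 <= M' by rewrite le_max lexx orbT.
have L_gt0 : 0 < L.
  by rewrite oppr_gt0 ln_lt0 // divr_gt0 //= ltr_pdivrMr //; have := gam_le1; lra.
have K_gt0 : 0 < K by rewrite !divr_gt0 ?mulr_gt0.
near=> a.
have a_lt1 : a < 1 by near: a; apply: nbhs_left_lt.
have a_gt_half : 2^-1 < a by near: a; apply: nbhs_left_gt; rewrite invf_lt1 ?ltr1n.
have a_close : 1 - a < expR (- (M' * L)) / K.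
  by near: a; apply: nbhs_left_ltBl; rewrite divr_gt0 ?expR_gt0.
have a_gt0 : 0 < a by apply: lt_trans a_gt_half; rewrite invr_gt0.
apply: le_trans (_ : M' <= _); first by rewrite le_max lexx.
apply: le_trans (q_le_Fbound a); rewrite ler_ndivlMr ?ln_mul_gam_lt0 //.
have ln_agam_ge : - L <= ln (a * gam).
  by rewrite opprK ler_ln ?posrE ?mulr_gt0 ?divr_gt0 // mulrC ler_pM2r // ltW.
have ratio_lt : ratio a < expR (- (M' * L)).
  apply: le_lt_trans (ratio_le_linear (ltW a_gt0) a_lt1) _.
  by rewrite -ltr_pdivlMr.
have : ln (ratio a) < - (M' * L).
  by rewrite -[X in _ < X]expRK ltr_ln ?posrE ?expR_gt0 ?ratio_gt0 ?(ltW a_gt0).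
have := ler_wpM2l M'_ge0 ln_agam_ge; rewrite mulrN; lra.
Unshelve. all: by end_near.
Qed.

End FboundAnalysis.

Lemma VI_stops_by_Fbound (R : realType) (m : nat) (Act : finType)
    (A : 'I_m.+1 -> {set Act}) (r : 'I_m.+1 -> Act -> R) (p : 'I_m.+1 -> Act -> 'I_m.+1 -> R)
    (v0 : 'I_m.+1 -> R) (alpha eps : R) :
  (forall x, exists a, a \in A x) -> (forall x a, a \in A x -> is_distr (p x a)) ->
  0 < alpha -> alpha < 1 -> 0 < eps -> 0 < gamma A p -> gamma A p <= 1 ->
  0 < sp (v1 A r) + sp v0 ->
  exists n, [/\ (1 <= n)%N, n%:R = Fbound eps (gamma A p) (v1 A r) v0 alpha
              & sp (VI A r p alpha v0 n.-1 \- VI A r p alpha v0 n) <= (1 - alpha) / alpha * eps].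
Proof.
move=> A_neq0 p_distr alpha_gt0 alpha_lt1 eps_gt0 gam_gt0 gam_le1 sp_gt0.
have [[//|k] _ kF] := Fbound_nat eps (gamma A p) (v1 A r) v0 alpha.
exists k.+1; split => //; have alpha_ge0 := ltW alpha_gt0.
apply: le_trans (sp_VI_step_le r A_neq0 p_distr v0 k alpha_ge0) _.
apply: le_trans (pow_le_of_q_le eps_gt0 gam_gt0 gam_le1 sp_gt0 (n := k) alpha_gt0 alpha_lt1 _).
  by rewrite ler_wpM2l ?exprn_ge0 ?mulr_ge0 ?gamma_ge0 ?sp_T_step_le.
by rewrite kF q_le_Fbound.
Qed.

Unset Implicit Arguments.

Theorem theorem2 (R : realType) :
  (forall (m : nat) (Act : finType) (A : 'I_m.+1 -> {set Act})
          (r : 'I_m.+1 -> Act -> R) (p : 'I_m.+1 -> Act -> 'I_m.+1 -> R)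
          (v0 : 'I_m.+1 -> R) (alpha eps : R),
     (forall x, exists a, a \in A x) ->
     (forall x a, a \in A x -> (forall y, 0 <= p x a y) /\ \sum_(y : 'I_m.+1) p x a y = 1) ->
     0 < alpha < 1 -> 0 < eps ->
     0 < gamma A p <= 1 ->
     0 < sp (v1 A r) + sp v0 ->
     exists N : nat,
       [/\ (1 <= N)%N,
           (forall n : nat, (1 <= n < N)%N ->
              (1 - alpha) / alpha * eps < sp (VI A r p alpha v0 n.-1 \- VI A r p alpha v0 n)),
           sp (VI A r p alpha v0 N.-1 \- VI A r p alpha v0 N) <= (1 - alpha) / alpha * eps,
           N%:R <= Fbound eps (gamma A p) (v1 A r) v0 alpha
         & forall phi : 'I_m.+1 -> Act,
             (forall x, phi x \in A x) ->
             Tphi r p alpha phi (VI A r p alpha v0 N.-1) = VI A r p alpha v0 N ->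
             eps_optimal A r p alpha eps (det_policy R phi)]) /\
  (forall (m : nat) (eps gam : R) (v0 v1 : 'I_m.+1 -> R),
     0 < eps -> 0 < gam <= 1 -> 0 < sp v1 + sp v0 ->
     [/\ Fbound eps gam v1 v0 a @[a --> (0:R)^'+] --> (1:R),
         Fbound eps gam v1 v0 a @[a --> (1:R)^'-] --> +oo
       & forall a b : R, 0 < a -> a <= b -> b < 1 ->
           Fbound eps gam v1 v0 a <= Fbound eps gam v1 v0 b]).
Proof.
split=> [m Act A r p v0 alpha eps A_neq0 p_distr /andP[alpha_gt0 alpha_lt1] eps_gt0
           /andP[gam_gt0 gam_le1] sp_gt0
        | m eps gam v0 v1 eps_gt0 /andP[gam_gt0 gam_le1] sp_gt0].
  pose stops n := (1 <= n)%N &&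
    (sp (VI A r p alpha v0 n.-1 \- VI A r p alpha v0 n) <= (1 - alpha) / alpha * eps).
  have [n0 [n0_ge1 n0F n0_stops]] :=
    VI_stops_by_Fbound A_neq0 p_distr alpha_gt0 alpha_lt1 eps_gt0 gam_gt0 gam_le1 sp_gt0.
  have [|N /andP[N_ge1 N_stops] N_min] := @ex_minnP stops; first by exists n0; apply/andP.
  exists N; split => //.
  - move=> n /andP[n_ge1 n_lt_N]; rewrite ltNge; apply: contraTN n_lt_N => n_stops.
    by rewrite -leqNgt N_min // /stops n_ge1.
  - by rewrite -n0F ler_nat N_min // /stops n0_ge1.
  - case: N N_ge1 N_stops {N_min} => // k _ k_stops phi phiA phi_greedy.
    exact: (greedy_eps_optimal A_neq0 p_distr alpha_gt0 alpha_lt1 phiA phi_greedy k_stops).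
by split; [exact: Fbound_cvg0 | exact: Fbound_cvg1 | exact: Fbound_nondecreasing].
Qed.
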